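(* Let $m,n\geq 1$ and let $\mathcal{B}$ be the $\mathbb{C}$-linear braided rigid monoidal category described in the context, with parameters $\alpha,\beta,\kappa,\kappa'\in\mathbb{C}$. In $\mathrm{End}_{\mathcal{B}}(V_{m,n})$, $V_{m,n}=(X^* )^{\otimes m}\otimes X^{\otimes n}$, define elements $J^{(n)}_1,\dots,J^{(n)}_{m+n}$ by $$J^{(n)}_1=1,\qquad J^{(n)}_i=(-\alpha\beta)^{-1}h_{n+1-i}\,J^{(n)}_{i-1}\,h_{n+1-i}\quad(2\leq i\leq n),$$ $$J^{(n)}_{n+1}=(-\alpha\beta)^{n}\,\mathrm{id}_{(X^* )^{\otimes(m-1)}}\otimes\bigl(c_{X^{\otimes n},X^*}\circ c_{X^*,X^{\otimes n}}\bigr)$$ (the double braiding of the black factor $1'$ with all $n$ white factors), and $$J^{(n)}_{n+j}=(-\alpha\beta)^{-1}g_{j-1}\,J^{(n)}_{n+j-1}\,g_{j-1}\quad(2\leq j\leq m).$$ Then every $J^{(n)}_j$, $j=2,\dots,m+n$, lies in the quantum walled Brauer algebra $\mathrm{qwB}_{m,n}$, i.e. in the subalgebra of $\mathrm{End}_{\mathcal{B}}(V_{m,n})$ generated by $g_1,\dots,g_{m-1}$, $E$, $h_1,\dots,h_{n-1}$.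
   Context: $\mathcal{B}$ is the $\mathbb{C}$-linear strict monoidal braided category whose objects are finite tensor words in two objects $X$ (''white'') and $X^*$ (''black''), with braiding $c_{A,B}:A\otimes B\to B\otimes A$, and with duality morphisms $\mathrm{ev}_{\bullet\circ}:X^*\otimes X\to\mathbf 1$, $\mathrm{ev}_{\circ\bullet}:X\otimes X^*\to\mathbf 1$, $\mathrm{coev}_{\bullet\circ}:\mathbf 1\to X^*\otimes X$, $\mathrm{coev}_{\circ\bullet}:\mathbf 1\to X\otimes X^*$ satisfying the zigzag identities (morphisms are linear combinations of tangles modulo isotopy), subject to the relations: $c_{X,X}^2=-\alpha\beta\,\mathrm{id}+(\alpha+\beta)c_{X,X}$; $c_{X,X^*}\circ\mathrm{coev}_{\circ\bullet}=\kappa\,\mathrm{coev}_{\bullet\circ}$; $c_{X^*,X}\circ\mathrm{coev}_{\bullet\circ}=\kappa'\,\mathrm{coev}_{\circ\bullet}$; $\mathrm{ev}_{\circ\bullet}\circ\mathrm{coev}_{\circ\bullet}=\frac{\theta+1}{\kappa'(\alpha+\beta)}$, $\mathrm{ev}_{\bullet\circ}\circ\mathrm{coev}_{\bullet\circ}=\frac{\theta+1}{\kappa(\alpha+\beta)}$, where $\theta=\alpha\beta\kappa\kappa'$. The tensor factors of $V_{m,n}=(X^* )^{\otimes m}\otimes X^{\otimes n}$ are labelled from left to right $m',\dots,2',1',1,2,\dots,n$ (numbered outward from the ''wall'' between black and white factors). Generators: $g_j$ ($1\le j\le m-1$) is $c_{X^*,X^*}$ acting on factors $(j+1)',j'$ tensored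 with identities; $h_i$ ($1\le i\le n-1$) is $c_{X,X}$ acting on factors $i,i+1$ tensored with identities; $E=\mathrm{id}_{(X^* )^{\otimes(m-1)}}\otimes(\mathrm{coev}_{\bullet\circ}\circ\mathrm{ev}_{\bullet\circ})\otimes\mathrm{id}_{X^{\otimes(n-1)}}$ acting on factors $1',1$. *)

From HB Require Import structures.
From mathcomp Require Import all_boot all_algebra.
From mathcomp Require Import complex.
From mathcomp Require Import Rstruct.

Set Implicit Arguments.
Unset Strict Implicit.
Unset Printing Implicit Defensive.

Import GRing.Theory.
Local Open Scope ring_scope.

Definition CC : fieldType := (Rdefinitions.R)[i].

(* Objects: finite tensor words in X (true, "white") and Xs (false, "black").
   The tensor product of objects is concatenation, the unit is [::]. *)
Definition ob := seq bool.
Definition oX : ob := [:: true].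
Definition oXs : ob := [:: false].

(* Transport of a morphism along equalities of objects (decided by eqType);
   it is only ever applied where the objects are equal, in which case it is
   the canonical identification (the junk value 0 is never reached). *)
Definition castH (H : ob -> ob -> lmodType CC) (A B : ob) (A' B' : ob)
    (f : H A B) : H A' B' :=
  match A =P A', B =P B' with
  | ReflectT e1, ReflectT e2 =>
      eq_rect B (fun Y => H A' Y) (eq_rect A (fun Z => H Z B) f A' e1) B' e2
  | _, _ => 0
  end.
Arguments castH {H A B} A' B' f.

Record brcat := BrCat {
  Hom : ob -> ob -> lmodType CC;
  cmp : forall A B D, Hom B D -> Hom A B -> Hom A D;
  idm : forall A, Hom A A;
  tns : forall A B A' B', Hom A B -> Hom A' B' -> Hom (A ++ A') (B ++ B');
  brd : forall A B, Hom (A ++ B) (B ++ A);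
  brdV : forall A B, Hom (B ++ A) (A ++ B);
  ev_bw : Hom [:: false; true] [::];
  ev_wb : Hom [:: true; false] [::];
  coev_bw : Hom [::] [:: false; true];
  coev_wb : Hom [::] [:: true; false];
  cmpA : forall A B D E (f : Hom D E) (g : Hom B D) (h : Hom A B),
    cmp (cmp f g) h = cmp f (cmp g h);
  cmp1l : forall A B (f : Hom A B), cmp (idm B) f = f;
  cmp1r : forall A B (f : Hom A B), cmp f (idm A) = f;
  cmp_linl : forall A B D (a : CC) (f g : Hom B D) (h : Hom A B),
    cmp (a *: f + g) h = a *: cmp f h + cmp g h;
  cmp_linr : forall A B D (a : CC) (h : Hom B D) (f g : Hom A B),
    cmp h (a *: f + g) = a *: cmp h f + cmp h g;
  tns_linl : forall A B A' B' (a : CC) (f g : Hom A B) (h : Hom A' B'),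
    tns (a *: f + g) h = a *: tns f h + tns g h;
  tns_linr : forall A B A' B' (a : CC) (h : Hom A B) (f g : Hom A' B'),
    tns h (a *: f + g) = a *: tns h f + tns h g;
  tns_cmp : forall A B D A' B' D' (f : Hom B D) (g : Hom A B)
      (f' : Hom B' D') (g' : Hom A' B'),
    tns (cmp f g) (cmp f' g') = cmp (tns f f') (tns g g');
  tns_id : forall A B, tns (idm A) (idm B) = idm (A ++ B);
  tnsA : forall A B A' B' A'' B'' (f : Hom A B) (g : Hom A' B') (h : Hom A'' B''),
    castH (A ++ (A' ++ A'')) (B ++ (B' ++ B'')) (tns (tns f g) h)
    = tns f (tns g h);
  tns1l : forall A B (f : Hom A B), tns (idm [::]) f = f;
  tns1r : forall A B (f : Hom A B), castH A B (tns f (idm [::])) = f;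
  brd_nat : forall A B A' B' (f : Hom A B) (g : Hom A' B'),
    cmp (brd B B') (tns f g) = cmp (tns g f) (brd A A');
  brdVK : forall A B, cmp (brdV A B) (brd A B) = idm (A ++ B);
  brdKV : forall A B, cmp (brd A B) (brdV A B) = idm (B ++ A);
  hex1 : forall A B D,
    castH (A ++ (B ++ D)) (D ++ (A ++ B)) (brd (A ++ B) D)
    = cmp (castH (A ++ (D ++ B)) (D ++ (A ++ B)) (tns (brd A D) (idm B)))
          (tns (idm A) (brd B D));
  hex2 : forall A B D,
    castH (A ++ (B ++ D)) (B ++ (D ++ A)) (brd A (B ++ D))
    = cmp (tns (idm B) (brd A D))
          (castH (A ++ (B ++ D)) (B ++ (A ++ D)) (tns (brd A B) (idm D)));
  zz1 : cmp (tns (idm oX) ev_bw) (tns coev_wb (idm oX)) = idm oX;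
  zz2 : cmp (tns ev_bw (idm oXs)) (tns (idm oXs) coev_wb) = idm oXs;
  zz3 : cmp (tns (idm oXs) ev_wb) (tns coev_bw (idm oXs)) = idm oXs;
  zz4 : cmp (tns ev_wb (idm oX)) (tns (idm oX) coev_bw) = idm oX
}.

Arguments cmp {b A B D}.
Arguments tns {b A B A' B'}.

Section Defs.
Variable B : brcat.
Variables alpha beta kappa kappa' : CC.

Definition theta := alpha * beta * kappa * kappa'.

Definition B_relations : Prop :=
  [/\ cmp (brd B oX oX) (brd B oX oX)
        = (- (alpha * beta)) *: idm B (oX ++ oX) + (alpha + beta) *: brd B oX oX,
      cmp (brd B oX oXs) (coev_wb B) = kappa *: coev_bw B,
      cmp (brd B oXs oX) (coev_bw B) = kappa' *: coev_wb B,
      cmp (ev_wb B) (coev_wb B) = ((theta + 1) / (kappa' * (alpha + beta))) *: idm B [::]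
    & cmp (ev_bw B) (coev_bw B) = ((theta + 1) / (kappa * (alpha + beta))) *: idm B [::] ].

Definition whisk (P Q : ob) A A' (f : Hom B A A') : Hom B (P ++ (A ++ Q)) (P ++ (A' ++ Q)) :=
  tns (idm B P) (tns f (idm B Q)).

Variables m n : nat.

(* V_{m,n} = (Xs)^{[x] m} [x] X^{[x] n}; factors m',...,1',1,...,n. *)
Definition Vmn : ob := nseq m false ++ nseq n true.

(* g_j : c_{Xs,Xs} on factors (j+1)', j'  (1 <= j <= m-1) *)
Definition gen_g (j : nat) : Hom B Vmn Vmn :=
  castH Vmn Vmn (whisk (nseq (m - j.+1) false) (nseq j.-1 false ++ nseq n true)
                   (brd B oXs oXs)).

(* h_i : c_{X,X} on factors i, i+1  (1 <= i <= n-1) *)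
Definition gen_h (i : nat) : Hom B Vmn Vmn :=
  castH Vmn Vmn (whisk (nseq m false ++ nseq i.-1 true) (nseq (n - i.+1) true)
                   (brd B oX oX)).

(* E : coev_{bullet circ} o ev_{bullet circ} on factors 1', 1 *)
Definition gen_E : Hom B Vmn Vmn :=
  castH Vmn Vmn (whisk (nseq m.-1 false) (nseq n.-1 true) (cmp (coev_bw B) (ev_bw B))).

Definition qwB_gens (f : Hom B Vmn Vmn) : Prop :=
  (exists2 j, (1 <= j <= m - 1)%N & f = gen_g j)
  \/ f = gen_E
  \/ (exists2 i, (1 <= i <= n - 1)%N & f = gen_h i).

Inductive in_subalg (S : Hom B Vmn Vmn -> Prop) : Hom B Vmn Vmn -> Prop :=
| sub_gen f : S f -> in_subalg S f
| sub_one : in_subalg S (idm B Vmn)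
| sub_add f g : in_subalg S f -> in_subalg S g -> in_subalg S (f + g)
| sub_scale (a : CC) f : in_subalg S f -> in_subalg S (a *: f)
| sub_mul f g : in_subalg S f -> in_subalg S g -> in_subalg S (cmp f g).

Definition J_wall : Hom B Vmn Vmn :=
  (- (alpha * beta)) ^+ n *:
    castH Vmn Vmn (whisk (nseq m.-1 false) [::]
      (cmp (brd B (nseq n true) oXs) (brd B oXs (nseq n true)))).

(* J^{(n)}_i for i >= 1 (the value at index 0, never used, is 0). *)
Fixpoint J (i : nat) : Hom B Vmn Vmn :=
  match i with
  | 0 => 0
  | 1 => idm B Vmn
  | k.+1 =>
      if (k.+1 <= n)%N then
        (- (alpha * beta))^-1 *: cmp (gen_h (n - k)) (cmp (J k) (gen_h (n - k)))
      else if k.+1 == n.+1 then J_wall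
      else
        (- (alpha * beta))^-1 *: cmp (gen_g (k - n)) (cmp (J k) (gen_g (k - n)))
  end.

End Defs.
Arguments qwB_gens : clear implicits.

(* J_{n+1} is, up to a scalar, the double braiding D_Y = c_{Y,X*} c_{X*,Y} of the
   black strand 1' with the word Y = X^n of white strands.  For one white strand, the
   Hecke relation and c_{X,X*} coev = kappa coev, bent back with a zigzag identity, give
   -ab D_X + (a+b) kappa coev ev = id, so D_X lies in the span of 1 and E.  The hexagon
   axioms give c D_{YX} = (D_X (x) 1) c (D_Y (x) 1), where c braids the last white strand
   past Y; c is a product of the h_i, each invertible in qwB because
   h_i^2 = -ab + (a+b) h_i.  Induction on the length of Y puts J_{n+1} in qwB, and the
   other J_i arise from J_1 = 1 and J_{n+1} by multiplication with generators. *)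

From Pilot Require Import Defs.
From mathcomp Require Import all_boot all_algebra zify.

Set Implicit Arguments.
Unset Strict Implicit.
Unset Printing Implicit Defensive.

Import GRing.Theory.
Local Open Scope ring_scope.

Section Transport.
Variable B : brcat.
Local Notation Hom := (Defs.Hom B).

Lemma castH_id A C (f : Hom A C) : castH A C f = f.
Proof.
rewrite /castH; case: eqP => // e1; case: eqP => // e2.
by rewrite (eq_irrelevance e1 erefl) (eq_irrelevance e2 erefl).
Qed.

Definition heq A C A' C' (f : Hom A C) (g : Hom A' C') :=
  [/\ A = A', C = C' & castH A' C' f = g].

Local Notation "f =~ g" := (heq f g) (at level 70).

Lemma heq_refl A C (f : Hom A C) : f =~ f.
Proof. by split; rewrite ?castH_id. Qed.

Lemma heq_sym A C A' C' (f : Hom A C) (g : Hom A' C') : f =~ g -> g =~ f.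
Proof. by case=> e1 e2; subst; rewrite castH_id => ->; apply: heq_refl. Qed.

Lemma heq_trans A C A' C' A'' C'' (f : Hom A C) (g : Hom A' C') (h : Hom A'' C'') :
  f =~ g -> g =~ h -> f =~ h.
Proof. by case=> e1 e2; subst; rewrite castH_id => ->. Qed.

Lemma heq_castH A C A' C' X Y (f : Hom A C) (g : Hom A' C') :
  f =~ g -> castH X Y f = castH X Y g.
Proof. by case=> e1 e2; subst; rewrite castH_id => ->. Qed.

Lemma heq_tns A C D E A' C' D' E'
    (f : Hom A C) (g : Hom D E) (f' : Hom A' C') (g' : Hom D' E') :
  f =~ f' -> g =~ g' -> tns f g =~ tns f' g'.
Proof.
case=> e1 e2; subst; rewrite castH_id => ->.
by case=> e1 e2; subst; rewrite castH_id => ->; apply: heq_refl.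
Qed.

Lemma heq_tnsA A C A' C' A'' C'' (f : Hom A C) (g : Hom A' C') (h : Hom A'' C'') :
  tns (tns f g) h =~ tns f (tns g h).
Proof. by split; rewrite ?catA // tnsA. Qed.

Lemma castH_is_linear A C X Y (a : CC) (f g : Hom A C) :
  castH X Y (a *: f + g) = a *: castH X Y f + castH X Y g.
Proof.
rewrite /castH; case: (A =P X) => [e1|_]; case: (C =P Y) => [e2|_] /=;
  by [subst | rewrite scaler0 addr0].
Qed.

Lemma cmp_castH A C D C' (f : Hom C D) (g : Hom A C) :
  C = C' -> cmp f g = cmp (castH C' D f) (castH A C' g).
Proof. by move=> e; subst; rewrite !castH_id. Qed.

Lemma castH_cmp X A C D (f : Hom C D) (g : Hom A C) :
  A = X -> C = X -> D = X -> castH X X (cmp f g) = cmp (castH X X f) (castH X X g).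
Proof. by move=> eA eC eD; subst; rewrite !castH_id. Qed.

End Transport.

Notation "f =~ g" := (heq f g) (at level 70).

Section LinearMaps.
Variables (U V : lmodType CC) (phi : U -> V).
Hypothesis phi_lin : forall a f g, phi (a *: f + g) = a *: phi f + phi g.

Lemma lin_0 : phi 0 = 0.
Proof. by have := phi_lin (-1) 0 0; rewrite !scaleN1r !addNr. Qed.

Lemma lin_D f g : phi (f + g) = phi f + phi g.
Proof. by have := phi_lin 1 f g; rewrite !scale1r. Qed.

Lemma lin_Z a f : phi (a *: f) = a *: phi f.
Proof. by have := phi_lin a f 0; rewrite !addr0 lin_0 addr0. Qed.

End LinearMaps.

Section Bilinearity.
Variable B : brcat.
Local Notation Hom := (Defs.Hom B).

Lemma cmpDl A C D (f g : Hom C D) (h : Hom A C) : cmp (f + g) h = cmp f h + cmp g h.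
Proof. exact: (lin_D (fun a f g => cmp_linl a f g h)). Qed.
Lemma cmpZl A C D a (f : Hom C D) (h : Hom A C) : cmp (a *: f) h = a *: cmp f h.
Proof. exact: (lin_Z (fun a f g => cmp_linl a f g h)). Qed.
Lemma cmpDr A C D (f g : Hom A C) (h : Hom C D) : cmp h (f + g) = cmp h f + cmp h g.
Proof. exact: (lin_D (fun a f g => cmp_linr a h f g)). Qed.
Lemma cmpZr A C D a (f : Hom A C) (h : Hom C D) : cmp h (a *: f) = a *: cmp h f.
Proof. exact: (lin_Z (fun a f g => cmp_linr a h f g)). Qed.
Lemma tnsDl A C D E (f g : Hom A C) (h : Hom D E) : tns (f + g) h = tns f h + tns g h.
Proof. exact: (lin_D (fun a f g => tns_linl a f g h)). Qed.
Lemma tnsZl A C D E a (f : Hom A C) (h : Hom D E) : tns (a *: f) h = a *: tns f h.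
Proof. exact: (lin_Z (fun a f g => tns_linl a f g h)). Qed.
Lemma tnsDr A C D E (f g : Hom A C) (h : Hom D E) : tns h (f + g) = tns h f + tns h g.
Proof. exact: (lin_D (fun a f g => tns_linr a h f g)). Qed.
Lemma tnsZr A C D E a (f : Hom A C) (h : Hom D E) : tns h (a *: f) = a *: tns h f.
Proof. exact: (lin_Z (fun a f g => tns_linr a h f g)). Qed.
Lemma castHD A C X Y (f g : Hom A C) : castH X Y (f + g) = castH X Y f + castH X Y g.
Proof. exact: (lin_D (@castH_is_linear B A C X Y)). Qed.
Lemma castHZ A C X Y a (f : Hom A C) : castH X Y (a *: f) = a *: castH X Y f.
Proof. exact: (lin_Z (@castH_is_linear B A C X Y)). Qed.

Lemma tnsEl A C D E (f : Hom A C) (g : Hom D E) :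
  tns f g = cmp (tns f (idm B E)) (tns (idm B A) g).
Proof. by rewrite -tns_cmp cmp1l cmp1r. Qed.

Lemma tnsEr A C D E (f : Hom A C) (g : Hom D E) :
  tns f g = cmp (tns (idm B C) g) (tns f (idm B D)).
Proof. by rewrite -tns_cmp cmp1l cmp1r. Qed.

Lemma tns_idm2 (x y : bool) A C (f : Hom A C) :
  tns (idm B [:: x]) (tns (idm B [:: y]) f) = tns (idm B [:: x; y]) f.
Proof.
by have h := tnsA (idm B [:: x]) (idm B [:: y]) f; rewrite castH_id tns_id in h; rewrite -h.
Qed.

End Bilinearity.

Section Braiding.
Variable B : brcat.
Local Notation Hom := (Defs.Hom B).

(* The hexagon axiom makes c_{1,x} (and c_{x,1}) idempotent; it is also invertible. *)
Lemma brd_unitl (x : bool) : brd B [::] [:: x] = idm B [:: x].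
Proof.
have h := hex1 B [::] [::] [:: x].
have e := tns1r (brd B [::] [:: x]).
rewrite castH_id in e; rewrite !castH_id tns1l e in h.
have k := brdVK B [::] [:: x].
by rewrite -k {2}h -cmpA k cmp1l.
Qed.

Lemma brd_unitr (x : bool) : brd B [:: x] [::] = idm B [:: x].
Proof.
have h := hex2 B [:: x] [::] [::].
have e := tns1r (brd B [:: x] [::]).
rewrite castH_id in e; rewrite !castH_id tns1l e in h.
have k := brdVK B [:: x] [::].
by rewrite -k {2}h -cmpA k cmp1l.
Qed.

Definition dbraid (A Y : ob) : Hom (A ++ Y) (A ++ Y) := cmp (brd B Y A) (brd B A Y).

Lemma dbraid0 (x : bool) : dbraid [:: x] [::] = idm B [:: x].
Proof. by rewrite /dbraid brd_unitl brd_unitr cmp1l. Qed.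

(* By the hexagon axiom (id (x) c_{Y,z}) (c_{Y,x} (x) id) is c_{Y,xz}, which commutes
   with id_Y (x) D_{x,z} by naturality. *)
Lemma dbraid_snoc (x z : bool) (Y : ob) :
  cmp (tns (idm B [:: x]) (brd B Y [:: z])) (dbraid [:: x] (Y ++ [:: z]))
  = cmp (tns (dbraid [:: x] [:: z]) (idm B Y))
        (cmp (tns (idm B [:: x]) (brd B Y [:: z])) (tns (dbraid [:: x] Y) (idm B [:: z]))).
Proof.
have h1 := hex1 B Y [:: z] [:: x].
have h2 := hex2 B [:: x] Y [:: z].
have h3 := hex2 B Y [:: x] [:: z]; rewrite castH_id in h3.
have nat_D := brd_nat (idm B Y) (dbraid [:: x] [:: z]).
rewrite /dbraid (cmp_castH (brd B (Y ++ [:: z]) [:: x]) (brd B [:: x] (Y ++ [:: z]))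
  (esym (catA Y [:: z] [:: x]))) h1 h2.
rewrite !cmpA -(cmpA (tns (idm B Y) _)) -tns_cmp cmp1l -cmpA -h3 -cmpA nat_D !cmpA h3.
rewrite cmpA -(cmp_castH (tns (brd B Y [:: x]) (idm B [:: z]))
  (tns (brd B [:: x] Y) (idm B [:: z])) (esym (catA Y [:: x] [:: z]))).
by rewrite -tns_cmp cmp1l.
Qed.

End Braiding.

Section Skein.
Variable B : brcat.
Local Notation Hom := (Defs.Hom B).
Variables a s kappa : CC.
Hypothesis hecke :
  cmp (brd B oX oX) (brd B oX oX) = a *: idm B (oX ++ oX) + s *: brd B oX oX.
Hypothesis coev_twist : cmp (brd B oX oXs) (coev_wb B) = kappa *: coev_bw B.

Let c := brd B oX oX.
Let w := tns (coev_wb B) (idm B oX).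
Let v := tns (idm B oX) (coev_wb B).

(* The relation is first derived with the coevaluation [w] attached, where the hexagon
   axioms and naturality act on [coev_wb], and then recovered by [unbend]. *)
Lemma dbraid_skein_coev :
  a *: cmp (tns (idm B oX) (dbraid B oXs oX)) w + (s * kappa) *: tns (idm B oX) (coev_bw B)
  = w.
Proof.
pose u := cmp (tns (idm B oX) (brd B oXs oX)) w.
have cu : cmp (tns c (idm B oXs)) u = v.
  have h := hex1 B oX oXs oX; rewrite !castH_id in h.
  have k := brd_nat (coev_wb B) (idm B oX).
  by rewrite brd_unitl cmp1r h cmpA in k.
have cv : cmp (tns c (idm B oXs)) v = a *: u + s *: v.
  by rewrite -cu -cmpA -tns_cmp cmp1l hecke tnsDl !tnsZl tns_id cmpDl !cmpZl cmp1l cu.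
have cc : cmp (tns (idm B oX) (brd B oX oXs)) (cmp (tns c (idm B oXs)) v) = w.
  have h := hex2 B oX oX oXs; rewrite !castH_id in h.
  have k := brd_nat (idm B oX) (coev_wb B).
  by rewrite brd_unitr cmp1r h cmpA in k.
pose Q := tns (idm B oX) (brd B oX oXs).
have Qu : cmp Q u = cmp (tns (idm B oX) (dbraid B oXs oX)) w.
  by rewrite /Q /u -cmpA -tns_cmp cmp1l.
have Qv : cmp Q v = kappa *: tns (idm B oX) (coev_bw B).
  by rewrite /Q /v -tns_cmp cmp1l coev_twist tnsZr.
by rewrite cv cmpDr !cmpZr Qu Qv scalerA in cc.
Qed.

Definition unbend (f : Hom oX [:: true; false; true]) :
    Hom [:: false; true] [:: false; true] :=
  cmp (tns (ev_bw B) (idm B [:: false; true])) (tns (idm B oXs) f).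

Lemma unbend_coev : unbend w = idm B [:: false; true].
Proof.
have h1 := tnsA (idm B oXs) (coev_wb B) (idm B oX); rewrite castH_id in h1.
have h2 := tnsA (ev_bw B) (idm B oXs) (idm B oX); rewrite castH_id tns_id in h2.
rewrite /unbend -h1 -h2.
rewrite -(tns_cmp (tns (ev_bw B) (idm B oXs)) (tns (idm B oXs) (coev_wb B))).
by rewrite cmp1l zz2 tns_id.
Qed.

Lemma unbend_tns (h : Hom [::] [:: false; true]) :
  unbend (tns (idm B oX) h) = cmp h (ev_bw B).
Proof.
have ev1 := tns1r (ev_bw B); rewrite castH_id in ev1.
by rewrite /unbend tns_idm2 -(tnsEl (ev_bw B) h) tnsEr tns1l ev1.
Qed.

Lemma unbend_cmp_coev (g : Hom [:: false; true] [:: false; true]) :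
  unbend (cmp (tns (idm B oX) g) w) = g.
Proof.
rewrite /unbend -{1}(cmp1r (idm B oXs)) tns_cmp tns_idm2 -cmpA.
by rewrite -(tnsEl (ev_bw B) g) tnsEr tns1l cmpA -/(unbend w) unbend_coev cmp1r.
Qed.

Lemma dbraid_skein :
  a *: dbraid B oXs oX + (s * kappa) *: cmp (coev_bw B) (ev_bw B) = idm B [:: false; true].
Proof.
have := congr1 unbend dbraid_skein_coev.
rewrite /unbend tnsDr !tnsZr cmpDr !cmpZr -!/(unbend _).
by rewrite unbend_cmp_coev unbend_tns unbend_coev.
Qed.

End Skein.

Section Subalgebra.
Variables (B : brcat) (m n : nat).
Local Notation End := (Defs.Hom B (Vmn m n) (Vmn m n)).
Variable S : End -> Prop.
Local Notation alg := (in_subalg S).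

Definition alg_linv (x : End) := exists2 y, alg y & cmp y x = idm B (Vmn m n).

Lemma alg_linv_id : alg_linv (idm B (Vmn m n)).
Proof. by exists (idm B _); [apply: sub_one | rewrite cmp1l]. Qed.

Lemma alg_linv_cmp x y : alg_linv x -> alg_linv y -> alg_linv (cmp x y).
Proof.
move=> [x' ax' ex] [y' ay' ey]; exists (cmp y' x'); first exact: sub_mul.
by rewrite cmpA -(cmpA x') ex cmp1l.
Qed.

Lemma alg_linv_quadratic (a s : CC) x :
  a != 0 -> alg x -> cmp x x = a *: idm B _ + s *: x -> alg_linv x.
Proof.
move=> a0 ax xx; exists (a^-1 *: (x + (- s) *: idm B _)).
  by apply/sub_scale/sub_add/sub_scale/sub_one.
rewrite cmpZl cmpDl cmpZl cmp1l xx.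
by rewrite (scaleNr s) addrK scalerA mulVf // scale1r.
Qed.

Lemma alg_linv_cancel c x : alg_linv c -> alg (cmp c x) -> alg x.
Proof. by move=> [y ay yc] acx; rewrite -[x]cmp1l -yc cmpA; apply: sub_mul. Qed.

End Subalgebra.

Section Embedding.
Variable B : brcat.
Context {m n : nat}.
Local Notation Hom := (Defs.Hom B).
Local Notation V := (Vmn m n).

(* [castH] makes [emb P Q f] zero unless [P ++ A ++ Q = Vmn m n]; hence the side
   conditions below. *)
Definition emb (P Q : ob) A A' (f : Hom A A') : Hom V V := castH V V (whisk P Q f).

Lemma emb_heq P Q P' Q' A A' C C' (f : Hom A A') (g : Hom C C') :
  whisk P Q f =~ whisk P' Q' g -> emb P Q f = emb P' Q' g.
Proof. exact: heq_castH. Qed.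

Lemma emb_castH P Q A A' C C' (f : Hom A A') :
  A = C -> A' = C' -> emb P Q (castH C C' f) = emb P Q f.
Proof. by move=> e e'; subst; rewrite castH_id. Qed.

Lemma emb_cmp P Q A C D (f : Hom C D) (g : Hom A C) :
  P ++ A ++ Q = V -> P ++ C ++ Q = V -> P ++ D ++ Q = V ->
  emb P Q (cmp f g) = cmp (emb P Q f) (emb P Q g).
Proof. by move=> eA eC eD; rewrite /emb -castH_cmp // /whisk -!tns_cmp !cmp1l. Qed.

Lemma emb_idm P Q A : P ++ A ++ Q = V -> emb P Q (idm B A) = idm B V.
Proof. by move=> e; rewrite /emb /whisk !tns_id e castH_id. Qed.

Lemma emb_add P Q A A' (f g : Hom A A') : emb P Q (f + g) = emb P Q f + emb P Q g.
Proof. by rewrite /emb /whisk tnsDl tnsDr castHD. Qed.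

Lemma emb_scale P Q A A' a (f : Hom A A') : emb P Q (a *: f) = a *: emb P Q f.
Proof. by rewrite /emb /whisk tnsZl tnsZr castHZ. Qed.

Lemma emb_tnsl P Q Y A A' (f : Hom A A') : emb P Q (tns (idm B Y) f) = emb (P ++ Y) Q f.
Proof.
apply/emb_heq/(heq_trans (heq_tns (heq_refl _) (heq_tnsA _ _ _))).
by rewrite /whisk -tns_id; apply/heq_sym/heq_tnsA.
Qed.

Lemma emb_tnsr P Q Y A A' (f : Hom A A') : emb P Q (tns f (idm B Y)) = emb P (Y ++ Q) f.
Proof.
apply/emb_heq/heq_tns; first exact: heq_refl.
by apply: (heq_trans (heq_tnsA _ _ _)); rewrite tns_id; apply: heq_refl.
Qed.

End Embedding.

Lemma nseq_snoc (T : Type) k (x : T) : nseq k x ++ [:: x] = nseq k.+1 x.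
Proof. by rewrite -addn1 nseqD. Qed.

Lemma all_idE (s : seq bool) : all id s -> s = nseq (size s) true.
Proof. by elim: s => //= b s IH /andP[-> /IH {1}->]. Qed.

Section QuantumWalledBrauer.
Variables (B : brcat) (alpha beta kappa kappa' : CC) (m n : nat).
Hypothesis m_gt0 : (0 < m)%N.
Hypothesis ab_neq0 : alpha * beta != 0.
Hypothesis rels : B_relations B alpha beta kappa kappa'.

Local Notation a := (- (alpha * beta)).
Local Notation s := (alpha + beta).
Local Notation T k := (nseq k true).
Local Notation V := (Vmn m n).
Local Notation qwB := (in_subalg (qwB_gens B m n)).
Local Notation emb := (@emb B m n).

Lemma Vmn_whites Y : all id Y -> size Y = n -> nseq m false ++ Y = V.
Proof. by move=> /all_idE eY nY; rewrite eY nY. Qed.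

Lemma Vmn_wall Y : all id Y -> size Y = n -> nseq m.-1 false ++ false :: Y = V.
Proof. by move=> Y1 nY; rewrite -cat1s catA nseq_snoc prednK // Vmn_whites. Qed.

Ltac word_eq := rewrite /= -?catA /=; first [apply: Vmn_wall | apply: Vmn_whites];
  rewrite /= ?all_cat ?size_cat /= ?all_cat ?size_cat /= ?all_cat ?size_cat /=
    ?all_nseq ?size_nseq ?orbT //; lia.

Lemma emb_hecke P Q : P ++ (oX ++ oX) ++ Q = V ->
  cmp (emb P Q (brd B oX oX)) (emb P Q (brd B oX oX))
  = a *: idm B V + s *: emb P Q (brd B oX oX).
Proof.
case: rels => hecke _ _ _ _ e.
by rewrite -emb_cmp // hecke emb_add !emb_scale emb_idm.
Qed.

Lemma gen_hE i :
  gen_h B m n i = emb (nseq m false ++ T i.-1) (T (n - i.+1)) (brd B oX oX).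
Proof. by []. Qed.

Lemma gen_h_qwB i : (1 <= i <= n - 1)%N -> qwB (gen_h B m n i).
Proof. by move=> hi; apply: sub_gen; right; right; exists i. Qed.

Lemma gen_h_linv i : (1 <= i <= n - 1)%N -> alg_linv (qwB_gens B m n) (gen_h B m n i).
Proof.
move=> hi; apply: (alg_linv_quadratic (a := a) (s := s)).
- by rewrite oppr_eq0.
- exact: gen_h_qwB.
- by rewrite gen_hE emb_hecke //; word_eq.
Qed.

Lemma braid_front_qwB k j : (k.+1 + j = n)%N ->
  qwB (emb (nseq m false) (T j) (brd B (T k) oX))
  /\ alg_linv (qwB_gens B m n) (emb (nseq m false) (T j) (brd B (T k) oX)).
Proof.
elim: k j => [|k IH] j kj.
  by rewrite brd_unitl emb_idm; [split; [apply: sub_one | apply: alg_linv_id] | word_eq].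
have [IHalg IHlinv] := IH j.+1 ltac:(lia).
have hk : (1 <= k.+1 <= n - 1)%N by lia.
have hex := hex1 B (T k) oX oX.
rewrite -nseq_snoc.
rewrite -(emb_castH (nseq m false) (T j) (brd B (T k ++ oX) oX)
  (esym (catA _ _ _)) (erefl _)) hex.
rewrite emb_cmp; try word_eq.
rewrite emb_castH ?catA // emb_tnsr emb_tnsl.
have -> : emb (nseq m false ++ T k) (T j) (brd B oX oX) = gen_h B m n k.+1.
  by rewrite gen_hE (_ : n - k.+2 = j)%N //; lia.
split; first by apply: sub_mul; [exact: IHalg | exact: gen_h_qwB].
by apply: alg_linv_cmp; [exact: IHlinv | exact: gen_h_linv].
Qed.

Local Notation PP := (nseq m.-1 false).

Lemma dbraid1_qwB : (0 < n)%N -> qwB (emb PP (T n.-1) (dbraid B oXs oX)).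
Proof.
case: rels => hecke coev_twist _ _ _ n_gt0.
have a_neq0 : a != 0 by rewrite oppr_eq0.
have -> : dbraid B oXs oX = a^-1 *: (idm B _ + (- (s * kappa)) *: cmp (coev_bw B) (ev_bw B)).
  rewrite -(dbraid_skein hecke coev_twist) (scaleNr (s * kappa)) addrK.
  by rewrite scalerA mulVf // scale1r.
rewrite emb_scale emb_add emb_scale emb_idm; last by word_eq.
by apply/sub_scale/sub_add; [apply: sub_one | apply/sub_scale/sub_gen; right; left].
Qed.

Lemma dbraid_qwB k j : (k + j = n)%N -> qwB (emb PP (T j) (dbraid B oXs (T k))).
Proof.
elim: k j => [|k IH] j kj.
  by rewrite dbraid0 emb_idm; [apply: sub_one | word_eq].
have [front_alg front_linv] := braid_front_qwB (k := k) (j := j) ltac:(lia).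
apply: (alg_linv_cancel front_linv).
have step := congr1 (fun f => emb PP (T j) f) (dbraid_snoc B false true (T k)).
rewrite [LHS]emb_cmp in step; try word_eq.
rewrite [RHS]emb_cmp in step; try word_eq.
rewrite [in X in _ = X]emb_cmp in step; try word_eq.
rewrite (emb_tnsr _ _ _ (dbraid B oXs oX)) (emb_tnsr _ _ _ (dbraid B oXs (T k))) in step.
rewrite emb_tnsl nseq_snoc prednK // -nseqD in step.
rewrite -nseq_snoc step; apply: sub_mul.
  by rewrite (_ : k + j = n.-1)%N; [apply: dbraid1_qwB | ]; lia.
by apply: sub_mul; [exact: front_alg | apply: (IH j.+1); lia].
Qed.

Lemma J_wall_qwB : qwB (J_wall B alpha beta m n).
Proof. by apply/sub_scale/(dbraid_qwB (k := n) (j := 0)); rewrite addn0. Qed.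

End QuantumWalledBrauer.

Lemma J_in_subalg (B : brcat) (alpha beta : CC) (m n : nat)
    (S : Defs.Hom B (Vmn m n) (Vmn m n) -> Prop) :
  (forall i, (1 <= i <= n - 1)%N -> in_subalg S (gen_h B m n i)) ->
  (forall j, (1 <= j <= m - 1)%N -> in_subalg S (gen_g B m n j)) ->
  in_subalg S (J_wall B alpha beta m n) ->
  forall j, (1 <= j <= m + n)%N -> in_subalg S (J B alpha beta m n j).
Proof.
move=> Sh Sg Swall; elim=> [|[|k] IH] // /andP[_ hk]; first exact: sub_one.
have IHk : in_subalg S (J B alpha beta m n k.+1) by apply: IH; lia.
rewrite /=; case: ifP => [kn|nkn]; last case: ifP => [_ //|kn].
- have hi : in_subalg S (gen_h B m n (n - k.+1)) by apply: Sh; lia.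
  by apply/sub_scale/sub_mul/sub_mul.
- have gj : in_subalg S (gen_g B m n (k.+1 - n)) by apply: Sg; lia.
  by apply/sub_scale/sub_mul/sub_mul.
Qed.

Theorem lemma2p4p1 (B : brcat) (alpha beta kappa kappa' : CC) (m n : nat) :
  (1 <= m)%N -> (1 <= n)%N ->
  alpha * beta != 0 -> kappa != 0 -> kappa' != 0 -> alpha + beta != 0 ->
  B_relations B alpha beta kappa kappa' ->
  forall j : nat, (2 <= j <= m + n)%N ->
    @in_subalg B m n (qwB_gens B m n) (J B alpha beta m n j).
Proof.
move=> m_gt0 _ ab_neq0 _ _ _ rels j /andP[j_ge2 j_le].
apply: J_in_subalg; last lia.
- exact: gen_h_qwB.
- by move=> i hi; apply: sub_gen; left; exists i.
- exact: J_wall_qwB m_gt0 ab_neq0 rels.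
Qed.
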